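(* Let $\mathcal P$ be a Datalog program with negation, viewed as a program over Belnap's bilattice $\mathcal{FOUR}$ whose rules have the form $A\leftarrow (L_{1,1}\wedge\dots\wedge L_{1,n_1})\vee\dots\vee(L_{k,1}\wedge\dots\wedge L_{k,n_k})$ with the $L_{p,q}$ ground literals. (1) If $H_{\mathcal F}$ is the everywhere false hypothesis ($H_{\mathcal F}(A)=\mathcal F$ for all $A$), then $sem^{H_{\mathcal F}}_{\mathcal P}$ coincides with the well-founded semantics of $\mathcal P$. (2) If $H_{\mathcal U}$ is the everywhere underdefined hypothesis ($H_{\mathcal U}(A)=\mathcal U$ for all $A$), then $sem^{H_{\mathcal U}}_{\mathcal P}$ coincides with the Kripke–Kleene semantics of $\mathcal P$.
   Context: $\mathcal{FOUR}=\{\mathcal F,\mathcal T,\mathcal U,\mathcal O\}$ with knowledge order $\mathcal U\le_k\mathcal F,\mathcal T\le_k\mathcal O$ and truth order $\mathcal F\le_t\mathcal U,\mathcal O\le_t\mathcal T$; $\wedge,\vee$ are meet/join for $\le_t$, $\otimes,\oplus$ meet/join for $\le_k$; $\neg\mathcal T=\mathcal F$, $\neg\mathcal F=\mathcal T$, $\neg\mathcal U=\mathcal U$, $\neg\mathcal O=\mathcal O$. A program $\mathcal P=\langle F,R\rangle$ consists of a function $F:\mathcal{HB}_{\mathcal P}\to\mathcal{FOUR}$ (the facts) and a finite set $R$ of ground clauses $A\leftarrow B$, each ground atom the head of at most one clause; $Head$ is the set of heads. An interpretation is a function $\mathcal{HB}_{\mathcal P}\to\mathcal{FOUR}$, extended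 to formulas by $I(\neg A)=\neg I(A)$, $I(X\wedge Y)=I(X)\wedge I(Y)$, $I(X\vee Y)=I(X)\vee I(Y)$. Operations on interpretations are pointwise. $I,J$ are compatible if $I(A)\neq\mathcal U\neq J(A)$ implies $I(A)=J(A)$; $I\le J$ means $I(A)\neq\mathcal U\Rightarrow I(A)=J(A)$ for all $A$. $B\equiv_I\alpha$ means $J(B)=\alpha$ for all $J$ with $I\le J$. $T_R(I)(A)=\alpha$ if there is a clause $A\leftarrow B$ in $R$ with $B\equiv_I\alpha$, and $\mathcal U$ otherwise. For a program $\mathcal Q=\langle G,R\rangle$ and hypothesis $H$, $H'$ is sound w.r.t. $\mathcal Q$ if $G,H'$ are compatible and $H'_{/Head}\le T_R(G\oplus H')$ (where $I_{/S}$ is $I$ on $S$ and $\mathcal U$ elsewhere); the support $s^H_{\mathcal Q}$ is the maximal (w.r.t. $\le$) sound $H'\le H$. The $H$-founded semantics $sem^H_{\mathcal P}$ is the limit of the $\le$-increasing sequence $F_0=F$, $F_{n+1}=T_R(F_n)\oplus s^H_{\langle F_n,R\rangle}$. Interpretations with values in $\{\mathcal F,\mathcal T,\mathcal U\}$ are identified with partial interpretations (consistent sets of ground literals) via $I\mapsto\{A\mid I(A)=\mathcal T\}\cup\{\neg A\mid I(A)=\mathcal F\}$. Well-founded semantics (Van Gelder–Ross–Schlipf): for a partial interpretation $I$, $T_P(I)$ is the set of heads of rules all of whose body literals are in $I$; a set $U$ of ground atoms is unfounded w.r.t. $I$ if for every $A\in U$ and every rule with head $A$, some body literal $B$ has $\neg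 B\in I$ or $B\in U$; $U_P(I)$ is the greatest unfounded set; the well-founded semantics is the least fixpoint of $W_P(I)=T_P(I)\cup\neg U_P(I)$. Kripke–Kleene semantics (Fitting): $\Phi_{\mathcal P}(v)(A)=\mathcal T$ if there is a rule with head $A$ whose body is true under $v$; $=\mathcal F$ if there is a rule with head $A$ and all rules with head $A$ have body false under $v$; $=\mathcal U$ otherwise (three-valued Kleene evaluation); the Kripke–Kleene semantics is the fixpoint of $\Phi_{\mathcal P}$ obtained by iterating from the everywhere-$\mathcal U$ valuation (its $\le_k$-least fixpoint). *)

From mathcomp Require Import all_boot.
Set Implicit Arguments. Unset Strict Implicit. Unset Printing Implicit Defensive.

(* Belnap's bilattice FOUR, in Ginsberg's pair encoding:                    *)
(*   x = (evidence for truth, evidence for falsity).                        *)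
(* Knowledge order: componentwise implication; truth order: first component *)
(* increasing, second decreasing.                                           *)
Definition four := (bool * bool)%type.
Definition F4 : four := (false, true).
Definition T4 : four := (true, false).
Definition U4 : four := (false, false).
Definition O4 : four := (true, true).

Definition and4 (x y : four) : four := (x.1 && y.1, x.2 || y.2).
Definition or4 (x y : four) : four := (x.1 || y.1, x.2 && y.2).
Definition oplus4 (x y : four) : four := (x.1 || y.1, x.2 || y.2).
Definition neg4 (x : four) : four := (x.2, x.1).
Definition lek4 (x y : four) : bool := (x.1 ==> y.1) && (x.2 ==> y.2).

(* Interpretations over a finite Herbrand base A (ground Datalog).          *)
Definition interp (A : finType) := {ffun A -> four}.

(* ground literals: (a, true) is the atom a, (a, false) is  not a *)
Definition lit (A : finType) := (A * bool)%type.

(* a clause body in disjunctive normal form: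
   (L11 /\ ... /\ L1n1) \/ ... \/ (Lk1 /\ ... /\ Lknk) *)
Definition body (A : finType) := seq (seq (lit A)).

Definition lit_val {A : finType} (I : interp A) (l : lit A) : four :=
  if l.2 then I l.1 else neg4 (I l.1).
Definition eval_conj {A : finType} (I : interp A) (c : seq (lit A)) : four :=
  foldr (fun l acc => and4 (lit_val I l) acc) T4 c.
Definition eval_body {A : finType} (I : interp A) (b : body A) : four :=
  foldr (fun c acc => or4 (eval_conj I c) acc) F4 b.

Definition const_interp {A : finType} (x : four) : interp A := [ffun _ => x].
Definition oplusI {A : finType} (I J : interp A) : interp A :=
  [ffun a => oplus4 (I a) (J a)].

Definition compatible {A : finType} (I J : interp A) : bool :=
  [forall a, (I a != U4) ==> (J a != U4) ==> (I a == J a)].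
Definition leI {A : finType} (I J : interp A) : bool :=
  [forall a, (I a != U4) ==> (I a == J a)].

Definition equiv_to {A : finType} (I : interp A) (b : body A) (alpha : four) : bool :=
  [forall J : interp A, leI I J ==> (eval_body J b == alpha)].

(* A program over FOUR: facts F and rules R, each atom being the head of at
   most one clause, represented as a partial map from atoms to bodies. *)
Record prog4 (A : finType) := Prog4 { facts : interp A; rules : A -> option (body A) }.

(* T_R(I)(a) = alpha if the clause a <- B has B ==_I alpha, U otherwise
   (alpha is unique when it exists). *)
Definition TR {A : finType} (R : A -> option (body A)) (I : interp A) : interp A :=
  [ffun a => if R a is Some b then
               if equiv_to I b T4 then T4
               else if equiv_to I b F4 then F4
               else if equiv_to I b O4 then O4
               else U4
             else U4].

Definition is_head {A : finType} (R : A -> option (body A)) (a : A) : bool :=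
  if R a is Some _ then true else false.

Definition restrict_head {A : finType} (R : A -> option (body A)) (I : interp A) : interp A :=
  [ffun a => if is_head R a then I a else U4].

Definition sound {A : finType} (G : interp A) (R : A -> option (body A)) (H' : interp A) : bool :=
  compatible G H' && leI (restrict_head R H') (TR R (oplusI G H')).

Definition is_support {A : finType} (G : interp A) (R : A -> option (body A))
    (H S : interp A) : Prop :=
  [/\ sound G R S, leI S H &
      forall S', sound G R S' -> leI S' H -> leI S' S].

Definition H_sequence {A : finType} (P : prog4 A) (H : interp A) (f : nat -> interp A) : Prop :=
  f 0 = facts P /\
  forall n, exists s, is_support (f n) (rules P) H s /\
                      f n.+1 = oplusI (TR (rules P) (f n)) s.

Definition Hfounded_sem {A : finType} (P : prog4 A) (H M : interp A) : Prop :=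
  exists f, H_sequence P H f /\ exists n, forall m, n <= m -> f m = M.

(* Ground Datalog programs with negation: lists of rules (head, body),     *)
(* the body being a list (conjunction) of literals; facts are rules with   *)
(* empty body.                                                              *)
Definition dprog (A : finType) := seq (A * seq (lit A)).

Definition bodies_of {A : finType} (P : dprog A) (a : A) : body A :=
  [seq r.2 | r <- P & r.1 == a].

Definition to_four {A : finType} (P : dprog A) : prog4 A :=
  Prog4 (const_interp U4)
        (fun a => if bodies_of P a is [::] then None else Some (bodies_of P a)).

(* Well-founded semantics (Van Gelder - Ross - Schlipf) *)
Definition TP {A : finType} (P : dprog A) (I : {set lit A}) : {set A} :=
  [set a | has (fun r => (r.1 == a) && all (fun l => l \in I) r.2) P].

Definition unfounded {A : finType} (P : dprog A) (I : {set lit A}) (U : {set A}) : bool :=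
  [forall a in U, all (fun r => (r.1 != a) ||
        has (fun l => ((l.1, ~~ l.2) \in I) || (l.2 && (l.1 \in U))) r.2) P].

Definition UP {A : finType} (P : dprog A) (I : {set lit A}) : {set A} :=
  \bigcup_(U | unfounded P I U) U.

Definition WP {A : finType} (P : dprog A) (I : {set lit A}) : {set lit A} :=
  [set l : lit A | if l.2 then l.1 \in TP P I else l.1 \in UP P I].

Definition is_wfs {A : finType} (P : dprog A) (I : {set lit A}) : Prop :=
  WP P I = I /\ forall J, WP P J = J -> I \subset J.

Definition three_valued {A : finType} (M : interp A) : bool := [forall a, M a != O4].
Definition lits_of {A : finType} (M : interp A) : {set lit A} :=
  [set l : lit A | M l.1 == (if l.2 then T4 else F4)].

(* Kripke - Kleene semantics (Fitting); on three-valued interpretations the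
   FOUR connectives are Kleene's strong three-valued connectives. *)
Definition Phi {A : finType} (P : dprog A) (v : interp A) : interp A :=
  [ffun a => let bs := bodies_of P a in
             if has (fun c => eval_conj v c == T4) bs then T4
             else if (bs != [::]) && all (fun c => eval_conj v c == F4) bs then F4
             else U4].

Definition leKI {A : finType} (I J : interp A) : bool := [forall a, lek4 (I a) (J a)].

Definition is_kk {A : finType} (P : dprog A) (M : interp A) : Prop :=
  [/\ three_valued M, Phi P M = M &
      forall N, three_valued N -> Phi P N = N -> leKI M N].

(* The H-founded sequence increases in the information order, so over a
   finite Herbrand base it is stationary after at most |A| steps; its
   stationary value is the H-founded semantics.  The support s^H_G is
   computed explicitly: it is H on the atoms where some sound H' <= H is
   defined, and U elsewhere.

   For H = U the support is trivial, the sequence is the Kleene iteration of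
   T_R from U, and on three-valued interpretations T_R coincides with
   Fitting's operator Phi_P: this is the Kripke-Kleene semantics.

   For H = F a step makes an atom true when T_R does, i.e. when it is in
   T_P, and false when T_R or the support does.  The atoms false after a
   step form an unfounded set; conversely an unfounded set containing no
   true atom is a sound false hypothesis, hence lies in the support.  So the
   false atoms of the limit M form the greatest unfounded set, W_P(M) = M,
   and induction along the sequence puts M below every fixpoint of W_P. *)

From mathcomp Require Import all_boot.
Set Implicit Arguments. Unset Strict Implicit. Unset Printing Implicit Defensive.

Section Interpretations.
Variable A : finType.
Implicit Types (I J K S : interp A) (a : A) (l : lit A).

Lemma leIP I J : reflect (forall a, I a != U4 -> I a = J a) (leI I J).
Proof.
apply: (iffP forallP) => IJ a; first by move=> Ia; apply/eqP/(implyP (IJ a)).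
by apply/implyP => /IJ ->; rewrite eqxx.
Qed.

Lemma leI_agree I J a : leI I J -> I a != U4 -> I a = J a.
Proof. by move/leIP; apply. Qed.

Lemma compatibleP I J :
  reflect (forall a, I a != U4 -> J a != U4 -> I a = J a) (compatible I J).
Proof.
apply: (iffP forallP) => IJ a; first by move=> Ia Ja; apply/eqP; move: (IJ a); rewrite Ia Ja.
by apply/implyP => Ia; apply/implyP => Ja; rewrite (IJ a Ia Ja) eqxx.
Qed.

Lemma compatible_agree I J a : compatible I J -> I a != U4 -> J a != U4 -> I a = J a.
Proof. by move/compatibleP; apply. Qed.

Lemma leI_refl I : leI I I.
Proof. exact/leIP. Qed.

Lemma leI_trans I J K : leI I J -> leI J K -> leI I K.
Proof.
move=> IJ JK; apply/leIP => a Ia; have Ja : J a != U4 by rewrite -(leI_agree IJ Ia).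
by rewrite (leI_agree IJ Ia) (leI_agree JK Ja).
Qed.

Lemma leI_anti I J : leI I J -> leI J I -> I = J.
Proof.
move=> IJ JI; apply/ffunP => a.
have [Ia|Ia] := eqVneq (I a) U4; last exact: leI_agree.
have [Ja|Ja] := eqVneq (J a) U4; last by rewrite (leI_agree JI Ja).
by rewrite Ia Ja.
Qed.

Lemma leUI I : leI (const_interp U4) I.
Proof. by apply/leIP => a; rewrite ffunE eqxx. Qed.

Lemma oplusIE I J a : oplusI I J a = oplus4 (I a) (J a).
Proof. by rewrite ffunE. Qed.

Lemma oplusI_leI I I' J J' :
  leI I I' -> leI J J' -> compatible I' J' -> leI (oplusI I J) (oplusI I' J').
Proof.
move=> /forallP II' /forallP JJ' /forallP IJ'; apply/forallP => a; rewrite !oplusIE.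
move: (II' a) (JJ' a) (IJ' a).
by case: (I a) => [[] []]; case: (I' a) => [[] []]; case: (J a) => [[] []];
   case: (J' a) => [[] []].
Qed.

Lemma leI_oplusI I J : compatible I J -> leI I (oplusI I J).
Proof.
move=> /forallP IJ; apply/forallP => a; rewrite oplusIE; move: (IJ a).
by case: (I a) => [[] []]; case: (J a) => [[] []].
Qed.

Definition defined I := [set a | I a != U4].

Lemma leI_defined_eq I J : leI I J -> #|defined J| <= #|defined I| -> I = J.
Proof.
move=> IJ card_le.
have sub : defined I \subset defined J.
  by apply/subsetP => a; rewrite !inE => Ia; rewrite -(leI_agree IJ Ia).
have /eqP eqIJ : defined I == defined J by rewrite eqEcard sub.
apply: (leI_anti IJ); apply/leIP => a Ja.
have : a \in defined I by rewrite eqIJ inE.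
by rewrite inE => Ia; rewrite (leI_agree IJ Ia).
Qed.

Lemma lit_val_leI I J l : leI I J -> lit_val I l != U4 -> lit_val J l = lit_val I l.
Proof.
move=> IJ lU; have Il : I l.1 != U4.
  by move: lU; rewrite /lit_val; case: l.2; case: (I l.1) => [[] []].
by rewrite /lit_val (leI_agree IJ Il).
Qed.

Lemma lit_val_oplus_false I S l : (S l.1 == U4) || (S l.1 == F4) ->
  lit_val (oplusI I S) l == F4 -> (lit_val I l == F4) || l.2 && (S l.1 == F4).
Proof.
by rewrite /lit_val oplusIE; case: l.2; case: (I l.1) => [[] []]; case: (S l.1) => [[] []].
Qed.

Definition fill x I : interp A := [ffun a => if I a == U4 then x else I a].

Lemma leI_fill x I : leI I (fill x I).
Proof. by apply/leIP => a; rewrite ffunE => /negbTE ->. Qed.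

Lemma lit_val_fillO I l : lit_val (fill O4 I) l = (lit_val I l != F4, lit_val I l != T4).
Proof. by rewrite /lit_val ffunE; case: l.2; case: (I l.1) => [[] []]. Qed.

End Interpretations.

Section Evaluation.
Variable A : finType.
Implicit Types (I J : interp A) (l : lit A) (c : seq (lit A)) (b : body A).

Lemma eval_conj_cons I l c : eval_conj I (l :: c) = and4 (lit_val I l) (eval_conj I c).
Proof. by []. Qed.

Lemma eval_conj_fst I c : (eval_conj I c).1 = all (fun l => (lit_val I l).1) c.
Proof. by elim: c => //= l c <-. Qed.

Lemma eval_conj_snd I c : (eval_conj I c).2 = has (fun l => (lit_val I l).2) c.
Proof. by elim: c => //= l c <-. Qed.

Lemma eval_body_fst I b : (eval_body I b).1 = has (fun c => (eval_conj I c).1) b.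
Proof. by elim: b => //= c b <-. Qed.

Lemma eval_body_snd I b : (eval_body I b).2 = all (fun c => (eval_conj I c).2) b.
Proof. by elim: b => //= c b <-. Qed.

Lemma eval_conj_T I c : (eval_conj I c == T4) = all (fun l => lit_val I l == T4) c.
Proof.
elim: c => //= l c <-.
by case: (lit_val I l) => [[] []]; case: (eval_conj I c) => [[] []].
Qed.

Lemma eval_conj_F I c : three_valued I ->
  (eval_conj I c == F4) = has (fun l => lit_val I l == F4) c.
Proof.
move=> /forallP I3; have litO l : lit_val I l != O4.
  by rewrite /lit_val; case: l.2; move: (I3 l.1); case: (I l.1) => [[] []].
have conjO c' : eval_conj I c' != O4.
  elim: c' => // l c'; rewrite eval_conj_cons; move: (litO l).
  by case: (lit_val I l) => [[] []]; case: (eval_conj I c') => [[] []].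
elim: c => // l c IH; rewrite eval_conj_cons [has _ _]/= -IH; move: (litO l) (conjO c).
by case: (lit_val I l) => [[] []]; case: (eval_conj I c) => [[] []].
Qed.

Lemma eval_body_T I b : has (all (fun l => lit_val I l == T4)) b -> eval_body I b = T4.
Proof.
elim: b => //= c b IH /orP [|/IH ->]; first by rewrite -eval_conj_T => /eqP ->.
by case: (eval_conj I c) => [[] []].
Qed.

Lemma eval_body_F I b : all (has (fun l => lit_val I l == F4)) b -> eval_body I b = F4.
Proof.
have conjF c : has (fun l => lit_val I l == F4) c -> eval_conj I c = F4.
  elim: c => //= l c IH /orP [/eqP -> // | /IH ->].
  by case: (lit_val I l) => [[] []].
by elim: b => //= c b IH /andP [/conjF -> /IH ->].
Qed.

Lemma eval_body_two_valued I b :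
  (forall a, (I a).1 = ~~ (I a).2) -> (eval_body I b).1 = ~~ (eval_body I b).2.
Proof.
move=> two; have litv l : (lit_val I l).1 = ~~ (lit_val I l).2.
  by rewrite /lit_val; case: l.2; rewrite /= two ?negbK.
have conj c : (eval_conj I c).1 = ~~ (eval_conj I c).2.
  by rewrite eval_conj_fst eval_conj_snd -all_predC; apply: eq_all => l; rewrite /= litv.
by rewrite eval_body_fst eval_body_snd -has_predC; apply: eq_has => c; rewrite /= conj.
Qed.

Lemma equiv_toP I b x :
  reflect (forall J, leI I J -> eval_body J b = x) (equiv_to I b x).
Proof.
apply: (iffP forallP) => h J; first by move=> IJ; apply/eqP/(implyP (h J)).
by apply/implyP => /h ->.
Qed.

Lemma equiv_to_leI I J b x : leI I J -> equiv_to I b x -> equiv_to J b x.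
Proof. by move=> IJ /equiv_toP h; apply/equiv_toP => K JK; apply/h/(leI_trans IJ). Qed.

Lemma equiv_to_unique I b x y : equiv_to I b x -> equiv_to I b y -> x = y.
Proof. by move=> /equiv_toP hx /equiv_toP hy; rewrite -(hx I) ?(hy I) ?leI_refl. Qed.

(* Filling the undefined atoms with O is the worst case for both T and F. *)
Lemma equiv_to_T I b : equiv_to I b T4 = has (all (fun l => lit_val I l == T4)) b.
Proof.
apply/equiv_toP/idP => [/(_ _ (leI_fill O4 I)) /(congr1 snd) | Tc J IJ].
  rewrite eval_body_snd => /negbT; rewrite -has_predC; apply: sub_has => c /=.
  by rewrite eval_conj_snd -all_predC; apply: sub_all => l /=; rewrite lit_val_fillO negbK.
apply: eval_body_T; apply: sub_has Tc; apply: sub_all => l /eqP Tl.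
by rewrite (lit_val_leI IJ) ?Tl.
Qed.

Lemma equiv_to_F I b : equiv_to I b F4 = all (has (fun l => lit_val I l == F4)) b.
Proof.
apply/equiv_toP/idP => [/(_ _ (leI_fill O4 I)) /(congr1 fst) | Fc J IJ].
  rewrite eval_body_fst => /negbT; rewrite -all_predC; apply: sub_all => c /=.
  by rewrite eval_conj_fst -has_predC; apply: sub_has => l /=; rewrite lit_val_fillO negbK.
apply: eval_body_F; apply: sub_all Fc; apply: sub_has => l /eqP Fl.
by rewrite (lit_val_leI IJ) ?Fl.
Qed.

Lemma equiv_to_O I b : three_valued I -> equiv_to I b O4 = false.
Proof.
move=> /forallP I3; apply/negP => /equiv_toP /(_ _ (leI_fill T4 I)) bO.
suff: (eval_body (fill T4 I) b).1 = ~~ (eval_body (fill T4 I) b).2 by rewrite bO.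
by apply: eval_body_two_valued => a; rewrite ffunE; move: (I3 a); case: (I a) => [[] []].
Qed.

End Evaluation.

Section ImmediateConsequence.
Variables (A : finType) (R : A -> option (body A)).
Implicit Types (I J : interp A) (a : A).

Lemma TR_eq I a x : x != U4 ->
  (TR R I a == x) = (if R a is Some b then equiv_to I b x else false).
Proof.
move=> xU; rewrite ffunE; case: (R a) => [b|]; last by rewrite eq_sym (negbTE xU).
have [ex|nex] := boolP (equiv_to I b x).
  have E y : equiv_to I b y = (y == x).
    by apply/idP/eqP => [/equiv_to_unique/(_ ex) | ->].
  by rewrite !E; move: xU; clear ex E; case: x => [[] []].
apply/negbTE; apply: contra nex => /eqP vx; move: xU; rewrite -vx.
by do ![case: ifP => [-> // | _]].
Qed.

Lemma TR_is_head I a : TR R I a != U4 -> is_head R a.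
Proof. by rewrite ffunE /is_head; case: (R a). Qed.

Lemma TR_leI I J : leI I J -> leI (TR R I) (TR R J).
Proof.
move=> IJ; apply/leIP => a TIa; apply/eqP; rewrite eq_sym TR_eq //.
move: (eqxx (TR R I a)); rewrite TR_eq //; case: (R a) => // b.
exact: equiv_to_leI IJ.
Qed.

End ImmediateConsequence.

Section Support.
Variables (A : finType) (R : A -> option (body A)) (H : interp A).
Implicit Types (G S : interp A) (a : A).

Lemma restrict_headE S a : restrict_head R S a = if is_head R a then S a else U4.
Proof. by rewrite ffunE. Qed.

Lemma soundP G S : reflect
  (compatible G S /\ forall a, is_head R a -> S a != U4 -> TR R (oplusI G S) a = S a)
  (sound G R S).
Proof.
apply: (iffP andP) => [[GS /leIP le] | [GS le]]; split => //.
  by move=> a a_hd Sa; have := le a; rewrite restrict_headE a_hd => /(_ Sa) <-.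
apply/leIP => a; rewrite restrict_headE; case: ifP => [a_hd /(le a a_hd) -> // | _].
by rewrite eqxx.
Qed.

Definition support G : interp A :=
  [ffun a => if [exists S, [&& sound G R S, leI S H & S a != U4]] then H a else U4].

Lemma support_max G S : sound G R S -> leI S H -> leI S (support G).
Proof.
move=> GS SH; apply/leIP => a Sa.
have ex : [exists S', [&& sound G R S', leI S' H & S' a != U4]].
  by apply/existsP; exists S; rewrite GS SH Sa.
by rewrite ffunE ex (leI_agree SH Sa).
Qed.

Lemma support_leI G : leI (support G) H.
Proof. by apply/leIP => a; rewrite ffunE; case: ifP => //; rewrite eqxx. Qed.

Lemma support_witness G a : support G a != U4 ->
  exists S, [/\ sound G R S, leI S H & S a = support G a].
Proof.
rewrite ffunE; case: existsP => [[S /and3P [GS SH Sa]] _ | _]; last by rewrite eqxx.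
by exists S; split => //; apply: leI_agree SH Sa.
Qed.

Lemma compatible_support G : compatible G (support G).
Proof.
apply/compatibleP => a Ga sa; have [S [/andP [GS _] _ Sa]] := support_witness sa.
by rewrite -Sa; apply: compatible_agree GS Ga _; rewrite Sa.
Qed.

Lemma sound_support G : sound G R (support G).
Proof.
apply/soundP; split => [|a a_hd sa]; first exact: compatible_support.
have [S [GS SH Sa]] := support_witness sa; have /soundP [_ TS] := GS.
have TSa : TR R (oplusI G S) a = S a by apply: TS; rewrite // Sa.
rewrite -Sa -TSa; apply/esym; apply: leI_agree; last by rewrite TSa Sa.
exact: TR_leI (oplusI_leI (leI_refl G) (support_max GS SH) (compatible_support G)).
Qed.

Lemma is_support_support G : is_support G R H (support G).
Proof. by split; [exact: sound_support | exact: support_leI | exact: support_max]. Qed.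

Lemma is_support_uniq G s : is_support G R H s -> s = support G.
Proof.
case=> Gs sH s_max; apply: leI_anti; first exact: support_max.
exact: s_max (sound_support G) (support_leI G).
Qed.

Definition step G := oplusI (TR R G) (support G).

Lemma compatible_TR_support G : compatible (TR R G) (support G).
Proof.
apply/compatibleP => a Ta sa; have /soundP [_ TS] := sound_support G.
rewrite -(TS a (TR_is_head Ta) sa); apply: leI_agree Ta.
exact/TR_leI/leI_oplusI/compatible_support.
Qed.

(* The support of G is still sound for the next stage step G. *)
Lemma step_chain G : leI G (step G) -> leI (step G) (step (step G)).
Proof.
move=> G_le.
have compat : compatible (step G) (support G).
  apply/forallP => a; rewrite oplusIE; move: (forallP (compatible_TR_support G) a).
  by case: (TR R G a) => [[] []]; case: (support G a) => [[] []].
have supp_le : leI (support G) (support (step G)).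
  apply: support_max (support_leI G); apply/soundP; split => // a a_hd sa.
  have /soundP [_ TS] := sound_support G.
  rewrite -(TS a a_hd sa); apply/esym; apply: leI_agree; last by rewrite TS.
  exact: TR_leI (oplusI_leI G_le (leI_refl _) compat).
exact: oplusI_leI (TR_leI R G_le) supp_le (compatible_TR_support _).
Qed.

End Support.

Section HFoundedSequence.
Variables (A : finType) (P : prog4 A) (H : interp A).
Local Notation step := (step (rules P) H).

Definition Hseq n := iter n step (facts P).
Definition Hsem := Hseq #|A|.

Lemma HseqS n : Hseq n.+1 = step (Hseq n).
Proof. by []. Qed.

Lemma H_sequence_Hseq : H_sequence P H Hseq.
Proof.
split=> // n; exists (support (rules P) H (Hseq n)); split=> //.
exact: is_support_support.
Qed.

Lemma H_sequence_unique f : H_sequence P H f -> f =1 Hseq.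
Proof.
case=> f0 fS; elim=> [|n IH]; first exact: f0.
by have [s [sn ->]] := fS n; rewrite (is_support_uniq sn) IH.
Qed.

Hypothesis facts_le_step : leI (facts P) (step (facts P)).

Lemma Hseq_chain n : leI (Hseq n) (Hseq n.+1).
Proof. by elim: n => [|n IH]; [exact: facts_le_step | exact: step_chain IH]. Qed.

Lemma Hseq_leI m n : m <= n -> leI (Hseq m) (Hseq n).
Proof.
move/subnK <-; elim: (n - m) => [|d IH]; first exact: leI_refl.
by rewrite addSn; apply: leI_trans IH (Hseq_chain _).
Qed.

(* Each strict step defines a new atom, so at most |A| steps are strict. *)
Lemma Hseq_stationary n : #|A| <= n -> Hseq n = Hsem.
Proof.
have fixed k : Hseq k.+1 = Hseq k -> forall m, k <= m -> Hseq m = Hseq k.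
  move=> stable m /subnK <-; elim: (m - k) => [|d IH]; first exact: erefl.
  by rewrite addSn HseqS IH -HseqS stable.
have growth m : (forall k, k < m -> Hseq k.+1 != Hseq k) -> m <= #|defined (Hseq m)|.
  elim: m => // m IH strict; apply: leq_ltn_trans (IH (fun k lt => strict k (ltnW lt))) _.
  rewrite ltnNge; apply: contra_neqN (strict m (ltnSn m)) => card_le.
  exact/esym/(leI_defined_eq (Hseq_chain m)).
move=> n_ge; case: (pickP (fun k : 'I_#|A|.+1 => Hseq k.+1 == Hseq k)) => [k /eqP stable | none].
  have k_le : k <= #|A| := ltnSE (ltn_ord k).
  by rewrite /Hsem (fixed k stable n (leq_trans k_le n_ge)) (fixed k stable _ k_le).
have := growth #|A|.+1 (fun k lt => negbT (none (Ordinal lt))).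
by rewrite ltnNge max_card.
Qed.

Lemma Hseq_leI_Hsem n : leI (Hseq n) Hsem.
Proof. by rewrite -(Hseq_stationary (leq_maxr n #|A|)); apply: Hseq_leI (leq_maxl _ _). Qed.

Lemma step_Hsem : step Hsem = Hsem.
Proof. by rewrite -HseqS Hseq_stationary. Qed.

Lemma Hfounded_semE M : Hfounded_sem P H M <-> M = Hsem.
Proof.
split=> [[f [fH [n fM]]] | ->].
  by rewrite -(fM (maxn n #|A|)) ?leq_maxl // (H_sequence_unique fH) Hseq_stationary ?leq_maxr.
by exists Hseq; split; [exact: H_sequence_Hseq | exists #|A|; exact: Hseq_stationary].
Qed.

End HFoundedSequence.

Section DatalogPrograms.
Variables (A : finType) (P : dprog A).
Local Notation Q := (to_four P).
Local Notation R := (rules (to_four P)).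
Implicit Types (G H M : interp A) (a x : A) (l : lit A) (J : {set lit A}).

Lemma has_bodies_of p a : has p (bodies_of P a) = has (fun r => (r.1 == a) && p r.2) P.
Proof. by rewrite /bodies_of; elim: P => //= r s IH; case: (r.1 == a); rewrite /= IH. Qed.

Lemma all_bodies_of p a : all p (bodies_of P a) = all (fun r => (r.1 != a) || p r.2) P.
Proof. by rewrite /bodies_of; elim: P => //= r s IH; case: (r.1 == a); rewrite /= IH. Qed.

Lemma is_head_to_four a : is_head R a = (bodies_of P a != [::]).
Proof. by rewrite /is_head /=; case: (bodies_of P a). Qed.

Lemma TR_to_four_T G a :
  (TR R G a == T4) = has (all (fun l => lit_val G l == T4)) (bodies_of P a).
Proof. by rewrite TR_eq //=; case: (bodies_of P a) => [|c cs] //; apply: equiv_to_T. Qed.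

Lemma TR_to_four_F G a : (TR R G a == F4) =
  (bodies_of P a != [::]) && all (has (fun l => lit_val G l == F4)) (bodies_of P a).
Proof. by rewrite TR_eq //=; case: (bodies_of P a) => [|c cs] //; apply: equiv_to_F. Qed.

Lemma TR_to_four_three_valued G : three_valued G -> three_valued (TR R G).
Proof.
move=> G3; apply/forallP => a; rewrite TR_eq //=.
by case: (bodies_of P a) => [|c cs] //; rewrite equiv_to_O.
Qed.

Lemma step_three_valued H G : three_valued H -> three_valued G -> three_valued (step R H G).
Proof.
move=> /forallP H3 /TR_to_four_three_valued /forallP T3; apply/forallP => a.
rewrite oplusIE; move: (T3 a) (H3 a) (forallP (compatible_TR_support R H G) a).
move: (forallP (support_leI R H G) a).
by case: (TR R G a) => [[] []]; case: (support R H G a) => [[] []]; case: (H a) => [[] []].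
Qed.

Lemma facts_to_four_le_step H : leI (facts Q) (step R H (facts Q)).
Proof. exact: leUI. Qed.

Lemma Hseq_three_valued H n : three_valued H -> three_valued (Hseq Q H n).
Proof.
move=> H3; elim: n => [|n IH]; first by apply/forallP => a; rewrite ffunE.
by rewrite HseqS; apply: step_three_valued.
Qed.

Lemma Hseq_leI_Hsem_to_four H n : leI (Hseq Q H n) (Hsem Q H).
Proof. exact: Hseq_leI_Hsem (facts_to_four_le_step H) n. Qed.

Lemma step_Hsem_to_four H : step R H (Hsem Q H) = Hsem Q H.
Proof. exact: step_Hsem (facts_to_four_le_step H). Qed.

Lemma Hfounded_sem_to_four H M : Hfounded_sem Q H M <-> M = Hsem Q H.
Proof. exact: Hfounded_semE (facts_to_four_le_step H) M. Qed.

Lemma mem_lits_of G l : (l \in lits_of G) = (lit_val G l == T4).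
Proof. by rewrite inE /lit_val; case: l => x [] //=; case: (G x) => [[] []]. Qed.

Lemma mem_lits_of_pos G x : ((x, true) \in lits_of G) = (G x == T4).
Proof. by rewrite inE. Qed.

Lemma mem_lits_of_neg G x : ((x, false) \in lits_of G) = (G x == F4).
Proof. by rewrite inE. Qed.

Lemma mem_lits_of_opp G l : ((l.1, ~~ l.2) \in lits_of G) = (lit_val G l == F4).
Proof. by rewrite inE /lit_val; case: l => x [] //=; case: (G x) => [[] []]. Qed.

Lemma lits_of_inj M M' : three_valued M -> three_valued M' -> lits_of M = lits_of M' -> M = M'.
Proof.
move=> /forallP M3 /forallP M'3 /setP MM'; apply/ffunP => a.
move: (MM' (a, true)) (MM' (a, false)) (M3 a) (M'3 a); rewrite !inE /=.
by case: (M a) => [[] []]; case: (M' a) => [[] []].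
Qed.

Lemma TP_lits_of G a : (a \in TP P (lits_of G)) = (TR R G a == T4).
Proof.
rewrite inE TR_to_four_T has_bodies_of; apply: eq_has => r /=.
by congr (_ && _); apply: eq_all => l; rewrite mem_lits_of.
Qed.

Lemma TP_subset J J' : J \subset J' -> TP P J \subset TP P J'.
Proof.
move=> /subsetP JJ'; apply/subsetP => a; rewrite !inE; apply: sub_has => r.
by case/andP => -> /allP rJ; apply/allP => l /rJ /JJ'.
Qed.

Lemma mem_WP_pos J x : ((x, true) \in WP P J) = (x \in TP P J).
Proof. by rewrite [LHS]in_set. Qed.

Lemma mem_WP_neg J x : ((x, false) \in WP P J) = (x \in UP P J).
Proof. by rewrite [LHS]in_set. Qed.

Lemma unfoundedP J (U : {set A}) : reflect
  (forall x, x \in U -> all (has (fun l => ((l.1, ~~ l.2) \in J) || l.2 && (l.1 \in U)))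
                            (bodies_of P x))
  (unfounded P J U).
Proof.
apply: (iffP forallP) => UU x; first by move=> xU; move: (UU x); rewrite xU all_bodies_of.
by apply/implyP => /UU; rewrite all_bodies_of.
Qed.

End DatalogPrograms.

Section WellFounded.
Variables (A : finType) (P : dprog A).
Local Notation Q := (to_four P).
Local Notation R := (rules (to_four P)).
Local Notation HF := (const_interp F4 : interp A).
Local Notation stepF := (step R HF).
Local Notation M := (Hsem Q HF).
Implicit Types (G : interp A) (a x : A) (J : {set lit A}) (U : {set A}).

Lemma HF_three_valued : three_valued HF.
Proof. by apply/forallP => a; rewrite ffunE. Qed.

Lemma Hsem_false_three_valued : three_valued M.
Proof. exact: Hseq_three_valued HF_three_valued. Qed.

Lemma support_false G a : (support R HF G a == U4) || (support R HF G a == F4).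
Proof. by rewrite ffunE; case: ifP; rewrite ?ffunE. Qed.

Lemma stepF_T G a : three_valued G -> (stepF G a == T4) = (TR R G a == T4).
Proof.
move=> /(TR_to_four_three_valued P) /forallP T3; rewrite oplusIE.
move: (T3 a) (support_false G a) (forallP (compatible_TR_support R HF G) a).
by case: (TR R G a) => [[] []]; case: (support R HF G a) => [[] []].
Qed.

Lemma stepF_F G a : three_valued G ->
  (stepF G a == F4) = (TR R G a == F4) || (support R HF G a == F4).
Proof.
move=> /(TR_to_four_three_valued P) /forallP T3; rewrite oplusIE.
move: (T3 a) (support_false G a) (forallP (compatible_TR_support R HF G) a).
by case: (TR R G a) => [[] []]; case: (support R HF G a) => [[] []].
Qed.

Lemma unfounded_stepF G J : three_valued G -> {subset lits_of G <= J} ->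
  unfounded P J [set x | stepF G x == F4].
Proof.
move=> G3 GJ; apply/unfoundedP => x; rewrite inE stepF_F // => /orP [|sF].
  rewrite TR_to_four_F => /andP [_]; apply: sub_all => c; apply: sub_has => l Fl.
  by rewrite GJ // mem_lits_of_opp.
have [->|ne] := eqVneq (bodies_of P x) [::]; first by [].
have /soundP [_ TS] := sound_support R HF G.
have := TS x; rewrite is_head_to_four (eqP sF) => /(_ ne isT) /eqP.
rewrite TR_to_four_F => /andP [_]; apply: sub_all => c; apply: sub_has => l.
case/(lit_val_oplus_false (support_false G l.1))/orP => [Fl | /andP [-> sl]].
  by rewrite GJ // mem_lits_of_opp.
by rewrite inE stepF_F // sl !orbT.
Qed.

Lemma mem_UP_stepF G J x : three_valued G -> {subset lits_of G <= J} ->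
  stepF G x == F4 -> x \in UP P J.
Proof.
move=> G3 GJ Fx; apply/bigcupP; exists [set y | stepF G y == F4]; last by rewrite inE.
exact: unfounded_stepF.
Qed.

Lemma unfounded_not_true U x : unfounded P (lits_of M) U -> M x = T4 -> x \notin U.
Proof.
move/unfoundedP => UU.
suff Hseq_not_true n y : Hseq Q HF n y = T4 -> y \notin U by exact: Hseq_not_true.
elim: n y => [|n IH] y; first by rewrite ffunE.
rewrite HseqS => /eqP; rewrite stepF_T ?Hseq_three_valued ?HF_three_valued //.
rewrite TR_to_four_T => /hasP [c cb /allP Tc]; apply/negP => /UU /allP /(_ c cb).
case/hasP => l /Tc /eqP Tl /orP [|/andP [pos lU]].
  by rewrite mem_lits_of_opp (lit_val_leI (Hseq_leI_Hsem_to_four P HF n)) ?Tl.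
by move: Tl lU; rewrite /lit_val pos => /IH /negbTE ->.
Qed.

(* A false hypothesis on an unfounded set is sound as soon as it contradicts no true atom. *)
Lemma unfounded_false U x : unfounded P (lits_of M) U -> x \in U -> M x = F4.
Proof.
move=> UU xU; have M3 := Hsem_false_three_valued.
have notT y : y \in U -> M y != T4.
  by move=> yU; apply/eqP => /(unfounded_not_true UU); rewrite yU.
pose S : interp A := [ffun y => if y \in U then F4 else U4].
have MS y : oplusI M S y = if y \in U then F4 else M y.
  rewrite oplusIE ffunE; case: (boolP (y \in U)) => [/notT|_]; move: (forallP M3 y);
  by case: (M y) => [[] []].
have sound_S : sound M R S.
  apply/soundP; split.
    apply/forallP => y; rewrite ffunE; case: (boolP (y \in U)) => [/notT|_].
      by move: (forallP M3 y); case: (M y) => [[] []].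
    by rewrite eqxx implybT.
  move=> y; rewrite is_head_to_four ffunE => ne; case: ifP => // yU _.
  apply/eqP; rewrite TR_to_four_F ne /=; apply/allP => c cb.
  move/unfoundedP: UU => /(_ y yU) /allP /(_ c cb); apply: sub_has => l.
  rewrite mem_lits_of_opp /lit_val MS; case: (boolP (l.1 \in U)) => [/notT|_].
    by case: l.2; case: (M l.1) => [[] []].
  by rewrite andbF orbF.
have SHF : leI S HF by apply/leIP => y; rewrite !ffunE; case: ifP.
have Sx : S x != U4 by rewrite ffunE xU.
have Fx := leI_agree (support_max sound_S SHF) Sx.
by apply/eqP; rewrite -step_Hsem_to_four stepF_F // -Fx [S x]ffunE xU orbT.
Qed.

Lemma mem_UP_Hsem x : (x \in UP P (lits_of M)) = (M x == F4).
Proof.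
apply/idP/idP => [/bigcupP [U UU xU] | Fx]; first by rewrite (unfounded_false UU xU).
apply: mem_UP_stepF Hsem_false_three_valued (fun l => id) _.
by rewrite step_Hsem_to_four.
Qed.

Lemma WP_Hsem : WP P (lits_of M) = lits_of M.
Proof.
apply/setP => -[x []]; last by rewrite mem_WP_neg mem_lits_of_neg mem_UP_Hsem.
rewrite mem_WP_pos mem_lits_of_pos TP_lits_of -stepF_T ?Hsem_false_three_valued //.
by rewrite step_Hsem_to_four.
Qed.

Lemma lits_Hseq_subset J n : WP P J = J -> lits_of (Hseq Q HF n) \subset J.
Proof.
move=> WJ; elim: n => [|n IH]; first by apply/subsetP => l; rewrite inE ffunE; case: l.2.
have Gn3 := Hseq_three_valued P n HF_three_valued.
apply/subsetP => -[x []]; rewrite -WJ HseqS.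
  rewrite mem_lits_of_pos mem_WP_pos stepF_T // -TP_lits_of.
  exact: (subsetP (TP_subset P IH)).
by rewrite mem_lits_of_neg mem_WP_neg; apply: mem_UP_stepF Gn3 (subsetP IH).
Qed.

Lemma Hsem_wfs : is_wfs P (lits_of M).
Proof. by split; [exact: WP_Hsem | move=> J WJ; exact: lits_Hseq_subset]. Qed.

Lemma Hfounded_sem_false M' :
  Hfounded_sem Q HF M' <-> three_valued M' /\ is_wfs P (lits_of M').
Proof.
split=> [/Hfounded_sem_to_four -> | [M'3 [WM' leastM']]].
  by split; [exact: Hsem_false_three_valued | exact: Hsem_wfs].
have [_ leastM] := Hsem_wfs; apply/Hfounded_sem_to_four.
apply: lits_of_inj M'3 Hsem_false_three_valued _.
by apply/eqP; rewrite eqEsubset leastM // leastM' // WP_Hsem.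
Qed.

End WellFounded.

Section KripkeKleene.
Variables (A : finType) (P : dprog A).
Local Notation Q := (to_four P).
Local Notation R := (rules (to_four P)).
Local Notation HU := (const_interp U4 : interp A).
Local Notation M := (Hsem Q HU).
Implicit Types (G N : interp A).

Lemma step_undefined G : step R HU G = TR R G.
Proof.
rewrite /step (leI_anti (support_leI R HU G) (leUI _)); apply/ffunP => a.
by rewrite oplusIE [const_interp _ _]ffunE; case: (TR R G a) => [[] []].
Qed.

Lemma TR_Phi G : three_valued G -> TR R G = Phi P G.
Proof.
move=> G3; apply/ffunP => a; rewrite !ffunE /=.
case: (bodies_of P a) => [|c cs] //.
rewrite equiv_to_T equiv_to_F equiv_to_O // (eq_has (eval_conj_T G)).
by rewrite (eq_all (fun c => eval_conj_F c G3)).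
Qed.

Lemma Hsem_undefined_three_valued : three_valued M.
Proof. by apply: Hseq_three_valued; apply/forallP => a; rewrite ffunE. Qed.

Lemma Hsem_kk : is_kk P M.
Proof.
have M3 := Hsem_undefined_three_valued.
split=> // [|N N3 PhiN].
  by rewrite -TR_Phi // -step_undefined step_Hsem_to_four.
suff Hseq_le n : leKI (Hseq Q HU n) N by exact: Hseq_le.
elim: n => [|n IH]; first by apply/forallP => a; rewrite ffunE.
have le : leI (Hseq Q HU n) N.
  apply/forallP => a; move: (forallP IH a) (forallP N3 a).
  by case: (Hseq Q HU n a) => [[] []]; case: (N a) => [[] []].
apply/forallP => a; rewrite HseqS step_undefined -PhiN -TR_Phi //.
move: (forallP (TR_leI R le) a).
by case: (TR R (Hseq Q HU n) a) => [[] []]; case: (TR R N a) => [[] []].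
Qed.

Lemma is_kk_unique N N' : is_kk P N -> is_kk P N' -> N = N'.
Proof.
move=> [N3 PhiN leastN] [N'3 PhiN' leastN']; apply/ffunP => a.
move: (forallP (leastN N' N'3 PhiN') a) (forallP (leastN' N N3 PhiN) a).
by case: (N a) => [[] []]; case: (N' a) => [[] []].
Qed.

Lemma Hfounded_sem_undefined N : Hfounded_sem Q HU N <-> is_kk P N.
Proof.
split=> [/Hfounded_sem_to_four -> | kkN]; first exact: Hsem_kk.
by apply/Hfounded_sem_to_four; apply: is_kk_unique kkN Hsem_kk.
Qed.

End KripkeKleene.

Unset Implicit Arguments.
Theorem theorem2 (A : finType) (P : dprog A) :
  ((exists M, Hfounded_sem (to_four P) (const_interp F4) M) /\
   forall M : interp A, Hfounded_sem (to_four P) (const_interp F4) M <->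
                        three_valued M /\ is_wfs P (lits_of M)) /\
  ((exists M, Hfounded_sem (to_four P) (const_interp U4) M) /\
   forall M : interp A, Hfounded_sem (to_four P) (const_interp U4) M <-> is_kk P M).
Proof.
split; split.
- by exists (Hsem (to_four P) (const_interp F4)); apply/Hfounded_sem_to_four.
- exact: Hfounded_sem_false.
- by exists (Hsem (to_four P) (const_interp U4)); apply/Hfounded_sem_to_four.
- exact: Hfounded_sem_undefined.
Qed.
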